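(* Let $f^*\in L^2(\mathcal D)$ with $\mathbb E_{x\sim\mathcal D}[f^*(x)^2]\le1$. Let $f_{\mathrm{teacher}}$ be any function that is shrinkage-optimal with respect to $f^*$, and let $f_{\mathrm{student}}$ be any function that is shrinkage-optimal with respect to $f_{\mathrm{teacher}}$. Let $\mathcal L_{TE}=\mathbb E_x[(f_{\mathrm{teacher}}(x)-f^*(x))^2]$ and $\mathcal L_{ST}=\mathbb E_x[(f_{\mathrm{student}}(x)-f^*(x))^2]$. Then $$\mathcal L_{ST}\ \ge\ \frac{\big(\sqrt{1+3\mathcal L_{TE}}-\sqrt{1-\mathcal L_{TE}}\big)^2}{4}\ \ge\ \frac34\,\mathcal L_{TE}^2 .$$
   Context: $\mathcal D$ is a probability distribution on an input space $\mathcal X$; $\langle f,g\rangle_{\mathcal D}=\mathbb E_{x\sim\mathcal D}[f(x)g(x)]$. Shrinkage optimality: given $\hat f,f_{\mathrm{train}}:\mathcal X\to\mathbb R$, $\hat f$ is shrinkage-optimal with respect to $f_{\mathrm{train}}$ if for every $0\le\alpha\le1$, $\mathbb E_x[(\hat f(x)-f_{\mathrm{train}}(x))^2]\le\mathbb E_x[(\alpha\hat f(x)-f_{\mathrm{train}}(x))^2]$. All functions are in $L^2(\mathcal D)$. *)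

From HB Require Import structures.
From mathcomp Require Import all_boot all_order all_algebra.
From mathcomp Require Import all_classical all_reals all_analysis.
Set Implicit Arguments. Unset Strict Implicit. Unset Printing Implicit Defensive.
Import Order.TTheory GRing.Theory Num.Theory.
Local Open Scope classical_set_scope.
Local Open Scope ring_scope.

(* D is a probability measure P on a measurable space T. *)

Definition L2 {d : measure_display} {T : measurableType d} {R : realType}
  (P : probability T R) (f : T -> R) : Prop :=
  measurable_fun setT f /\ P.-integrable setT (fun x => (f x ^+ 2)%:E).

Definition Ex {d : measure_display} {T : measurableType d} {R : realType}
  (P : probability T R) (g : T -> R) : R := Rintegral P setT g.

Definition shrinkage_optimal {d : measure_display} {T : measurableType d}
  {R : realType} (P : probability T R) (fhat ftrain : T -> R) : Prop :=
  forall alpha : R, 0 <= alpha <= 1 ->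
    Ex P (fun x => (fhat x - ftrain x) ^+ 2)
    <= Ex P (fun x => (alpha * fhat x - ftrain x) ^+ 2).

From HB Require Import structures.
From mathcomp Require Import all_boot all_order all_algebra.
From mathcomp Require Import all_classical all_reals all_analysis.
From mathcomp Require Import ring lra.
Import Order.TTheory GRing.Theory Num.Theory.
Local Open Scope ring_scope.

(* Write S, T, F for the student, the teacher and the target f* in L^2(D).
   Minimising |a g - h|^2 over a in [0, 1] shows that a shrinkage-optimal g
   satisfies |g|^2 <= <g, h>, i.e. |g - h/2| <= |h|/2.  Hence
   |S - T/2| <= |T|/2, while |F - T/2|^2 >= |T|^2/4 + L_TE and
   |T|^2 + L_TE <= |F|^2 <= 1.  By the reverse triangle inequality
   sqrt L_ST >= |F - T/2| - |S - T/2| >= sqrt (|T|^2/4 + L_TE) - |T|/2, which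
   is smallest for the largest admissible |T|, namely sqrt (1 - L_TE). *)

Lemma le_of_shrinkage (R : realFieldType) (a b : R) : 0 <= a ->
  (forall al : R, 0 <= al <= 1 -> a - 2 * b <= al ^+ 2 * a - 2 * al * b) ->
  a <= b.
Proof.
move=> a_ge0 shrink; have b_ge0 : 0 <= b by have := shrink 0; lra.
have [//|lt_ba] := leP a b; have a_gt0 : 0 < a by lra.
(* the best scaling [k = b / a] leaves [(1 - k)^2 a <= 0] *)
pose k := b / a; have bE : b = k * a by rewrite /k mulfVK ?gt_eqF.
have k_ge0 : 0 <= k by rewrite /k divr_ge0.
have k_le1 : k <= 1 by rewrite /k ler_pdivrMr // mul1r ltW.
have := shrink k; rewrite k_ge0 k_le1 bE; nra.
Qed.

Lemma psd_quad_form_discr (R : realFieldType) (A B C : R) :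
  (forall x z : R, 0 <= A * x ^+ 2 + 2 * B * x * z + C * z ^+ 2) ->
  B ^+ 2 <= A * C.
Proof.
move=> psd; have := psd 1 0; have := psd 0 1.
have [A_gt0|A_le0] := ltP 0 A; first by have := psd (- B) A; nra.
have [C_gt0|C_le0] := ltP 0 C; first by have := psd C (- B); nra.
have := psd 1 (- B); nra.
Qed.

Lemma sqr_sqrt_sub_le (R : rcfType) (A B C : R) :
  0 <= A -> 0 <= C -> B ^+ 2 <= A * C ->
  (Num.sqrt C - Num.sqrt A) ^+ 2 <= A - 2 * B + C.
Proof.
move=> A_ge0 C_ge0 cs.
have B_le : B <= Num.sqrt A * Num.sqrt C.
  by rewrite -sqrtrM // (le_trans (ler_norm B)) // -sqrtr_sqr ler_wsqrtr.
rewrite sqrrB !sqr_sqrtr //; lra.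
Qed.

Lemma sqr_sqrt_gap_le {R : rcfType} {L t A C : R} :
  0 <= L -> 0 <= A -> A <= t / 4 -> t + L <= 1 -> t / 4 + L <= C ->
  (Num.sqrt (1 + 3 * L) - Num.sqrt (1 - L)) ^+ 2 / 4
    <= (Num.sqrt C - Num.sqrt A) ^+ 2.
Proof.
move=> L_ge0 A_ge0 A_le tL_le1 C_ge.
set a := Num.sqrt (1 + 3 * L); set b := Num.sqrt (1 - L); set r := Num.sqrt t.
have r_ge0 : 0 <= r := sqrtr_ge0 t.
have b_le_a : b <= a by rewrite ler_sqrt; lra.
have r_le_b : r <= b by rewrite ler_sqrt; lra.
have sqrtA_le : Num.sqrt A <= r / 2.
  rewrite -ler_sqr ?nnegrE ?sqrtr_ge0 ?divr_ge0 // sqr_sqrtr // expr_div_n.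
  by rewrite sqr_sqrtr; lra.
have sqrtC_ge : r + (a - b) <= 2 * Num.sqrt C.
  have lhs_ge0 : 0 <= r + (a - b) by lra.
  rewrite -ler_sqr ?nnegrE ?mulr_ge0 ?sqrtr_ge0 // exprMn !sqr_sqrtr; last lra.
  (* [r <= b] bounds the cross term, and [a^2 - b^2 = 4 L] *)
  have cross : r * (a - b) <= b * (a - b) by rewrite ler_wpM2r ?subr_ge0.
  have a2 : a ^+ 2 = 1 + 3 * L by rewrite sqr_sqrtr //; lra.
  have b2 : b ^+ 2 = 1 - L by rewrite sqr_sqrtr //; lra.
  have -> : (r + (a - b)) ^+ 2 = r ^+ 2 + 2 * (r * (a - b)) + (a - b) ^+ 2.
    by ring.
  have sq : 2 * (b * (a - b)) + (a - b) ^+ 2 = a ^+ 2 - b ^+ 2 by ring.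
  rewrite sqr_sqrtr; lra.
have -> : (a - b) ^+ 2 / 4 = ((a - b) / 2) ^+ 2 by field.
rewrite ler_sqr ?nnegrE; lra.
Qed.

Lemma sqr_sqrt_gap_ge (R : rcfType) (L : R) : 0 <= L <= 1 ->
  3 / 4 * L ^+ 2 <= (Num.sqrt (1 + 3 * L) - Num.sqrt (1 - L)) ^+ 2 / 4.
Proof.
move=> /andP[L_ge0 L_le1].
set a := Num.sqrt (1 + 3 * L); set b := Num.sqrt (1 - L).
have a2 : a ^+ 2 = 1 + 3 * L by rewrite sqr_sqrtr //; lra.
have b2 : b ^+ 2 = 1 - L by rewrite sqr_sqrtr //; lra.
(* [2 a b <= 1 + (a b)^2 = 2 + 2 L - 3 L^2] *)
have ab2 : (a * b) ^+ 2 = (1 + 3 * L) * (1 - L) by rewrite exprMn a2 b2.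
have := sqr_ge0 (a * b - 1).
have -> : (a - b) ^+ 2 = a ^+ 2 + b ^+ 2 - 2 * (a * b) by ring.
rewrite sqrrB1 ab2 a2 b2 => ?; lra.
Qed.

Lemma gram_student_loss_ge (R : rcfType) (nS nT nF dST dSF dTF : R) :
  (forall x y z : R, 0 <= x ^+ 2 * nS + y ^+ 2 * nT + z ^+ 2 * nF
                         + 2 * x * y * dST + 2 * x * z * dSF + 2 * y * z * dTF) ->
  nT <= dTF -> nS <= dST -> nF <= 1 ->
  let L := nT - 2 * dTF + nF in
  (Num.sqrt (1 + 3 * L) - Num.sqrt (1 - L)) ^+ 2 / 4 <= nS - 2 * dSF + nF /\
  3 / 4 * L ^+ 2 <= (Num.sqrt (1 + 3 * L) - Num.sqrt (1 - L)) ^+ 2 / 4.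
Proof.
move=> gram_psd teacher_shrunk student_shrunk nF_le1 L.
(* [A], [B], [C] are the Gram entries of [S - T/2] and [F - T/2] *)
pose A := nS - dST + nT / 4; pose C := nF - dTF + nT / 4.
pose B := dSF - dST / 2 - dTF / 2 + nT / 4.
have cs : B ^+ 2 <= A * C.
  apply: psd_quad_form_discr => x z.
  by have := gram_psd x (- (x + z) / 2) z; congr (_ <= _); rewrite /A /B /C; field.
have L_ge0 : 0 <= L by have := gram_psd 0 1 (-1); rewrite /L; lra.
have A_ge0 : 0 <= A by have := gram_psd 1 (-1/2) 0; rewrite /A; lra.
have C_ge : nT / 4 + L <= C by rewrite /L /C; lra.
have nT_ge0 : 0 <= nT by have := gram_psd 0 1 0; lra.
split; last by apply: sqr_sqrt_gap_ge; rewrite L_ge0 /L; lra.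
have A_le : A <= nT / 4 by rewrite /A; lra.
have nTL_le1 : nT + L <= 1 by rewrite /L; lra.
apply: (le_trans (sqr_sqrt_gap_le L_ge0 A_ge0 A_le nTL_le1 C_ge)).
have -> : nS - 2 * dSF + nF = A - 2 * B + C by rewrite /A /B /C; field.
have C_ge0 : 0 <= C by lra.
exact: sqr_sqrt_sub_le.
Qed.

Section SquareIntegrable.
Context {d : measure_display} {T : measurableType d} {R : realType}.
Variable P : probability T R.

Definition L2dot (g h : T -> R) : R := Ex P (fun x => g x * h x).

Lemma integrable_mul_L2 {g h : T -> R} : L2 P g -> L2 P h ->
  P.-integrable setT (EFin \o (fun x => g x * h x)).
Proof.
move=> [mg Ig] [mh Ih].
apply: (le_integrable measurableT _ _ (integrableD measurableT Ig Ih)) => /=.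
  apply/measurable_realfun.measurable_EFinP.
  exact: measurable_realfun.measurable_funM.
move=> x _ /=; rewrite lee_fin normrM [`|_ + _|]ger0_norm ?addr_ge0 ?sqr_ge0 //.
(* [2 |g h| <= g^2 + h^2] *)
have := sqr_ge0 (`|g x| - `|h x|); rewrite -(real_normK (num_real (g x))).
rewrite -(real_normK (num_real (h x))); nra.
Qed.

Lemma integrable_add g h : P.-integrable setT (EFin \o g) ->
  P.-integrable setT (EFin \o h) ->
  P.-integrable setT (EFin \o (fun x => g x + h x)).
Proof.
by move=> Ig Ih; apply: eq_integrable (integrableD measurableT Ig Ih).
Qed.

Lemma integrable_scale k g : P.-integrable setT (EFin \o g) ->
  P.-integrable setT (EFin \o (fun x => k * g x)).
Proof.
by move=> Ig; apply: eq_integrable (integrableZl measurableT k Ig).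
Qed.

Lemma Ex_sqr_lincomb3 (a b c : R) {g1 g2 g3 : T -> R} :
  L2 P g1 -> L2 P g2 -> L2 P g3 -> forall h : T -> R,
  (forall x, h x = (a * g1 x + b * g2 x + c * g3 x) ^+ 2) ->
  Ex P h = a ^+ 2 * L2dot g1 g1 + b ^+ 2 * L2dot g2 g2 + c ^+ 2 * L2dot g3 g3
    + 2 * a * b * L2dot g1 g2 + 2 * a * c * L2dot g1 g3
    + 2 * b * c * L2dot g2 g3.
Proof.
move=> L2g1 L2g2 L2g3 h hE.
have -> : h = (fun x => a ^+ 2 * (g1 x * g1 x) + b ^+ 2 * (g2 x * g2 x)
    + c ^+ 2 * (g3 x * g3 x) + 2 * a * b * (g1 x * g2 x)
    + 2 * a * c * (g1 x * g3 x) + 2 * b * c * (g2 x * g3 x)).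
  by apply: funext => x; rewrite hE; ring.
have I11 := integrable_mul_L2 L2g1 L2g1; have I22 := integrable_mul_L2 L2g2 L2g2.
have I33 := integrable_mul_L2 L2g3 L2g3; have I12 := integrable_mul_L2 L2g1 L2g2.
have I13 := integrable_mul_L2 L2g1 L2g3; have I23 := integrable_mul_L2 L2g2 L2g3.
rewrite /Ex !RintegralD ?RintegralZl //;
  by repeat apply: integrable_add; exact: integrable_scale.
Qed.

Lemma L2dot_self_ge0 g : 0 <= L2dot g g.
Proof. by apply: Rintegral_ge0 => x _; rewrite -expr2 sqr_ge0. Qed.

Lemma shrinkage_optimal_sqr_le_dot g h : L2 P g -> L2 P h ->
  shrinkage_optimal P g h -> L2dot g g <= L2dot g h.
Proof.
move=> L2g L2h opt; apply: le_of_shrinkage (L2dot_self_ge0 g) _ => al al01.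
have := opt al al01.
rewrite (Ex_sqr_lincomb3 1 (-1) 0 L2g L2h L2h) => [|x]; last by ring.
rewrite (Ex_sqr_lincomb3 al (-1) 0 L2g L2h L2h) => [|x]; last by ring.
lra.
Qed.

End SquareIntegrable.

Theorem theorem4p3 (d : measure_display) (T : measurableType d) (R : realType)
  (P : probability T R) (fstar fteacher fstudent : T -> R) :
  L2 P fstar -> L2 P fteacher -> L2 P fstudent ->
  Ex P (fun x => fstar x ^+ 2) <= 1 ->
  shrinkage_optimal P fteacher fstar ->
  shrinkage_optimal P fstudent fteacher ->
  let LTE := Ex P (fun x => (fteacher x - fstar x) ^+ 2) in
  let LST := Ex P (fun x => (fstudent x - fstar x) ^+ 2) in
  (Num.sqrt (1 + 3 * LTE) - Num.sqrt (1 - LTE)) ^+ 2 / 4 <= LST /\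
  3 / 4 * LTE ^+ 2 <= (Num.sqrt (1 + 3 * LTE) - Num.sqrt (1 - LTE)) ^+ 2 / 4.
Proof.
move=> L2F L2T L2S F_le1 opt_teacher opt_student LTE LST.
have gram a b c := Ex_sqr_lincomb3 P a b c L2S L2T L2F.
have -> : LTE = L2dot P fteacher fteacher - 2 * L2dot P fteacher fstar
                + L2dot P fstar fstar.
  by rewrite /LTE (gram 0 1 (-1)) => [|x]; ring.
have -> : LST = L2dot P fstudent fstudent - 2 * L2dot P fstudent fstar
                + L2dot P fstar fstar.
  by rewrite /LST (gram 1 0 (-1)) => [|x]; ring.
apply: (@gram_student_loss_ge _ _ _ _ (L2dot P fstudent fteacher)).
- move=> x y z; rewrite -(gram x y z _ (fun _ => erefl)).
  by apply: Rintegral_ge0 => w _; exact: sqr_ge0.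
- exact: shrinkage_optimal_sqr_le_dot.
- exact: shrinkage_optimal_sqr_le_dot.
- by under [L2dot _ _ _]eq_Rintegral do rewrite -expr2.
Qed.
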